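(* Let $\Gamma\subseteq\mathbb{Z}^d$ be a finite set. For every $n\ge2$ and $x\in\bar\Gamma$, $$\rho_n(\Phi_\Gamma(x))=\mathbb{E}^x\Big[\sum_{j=0}^{\tau-1}g_n(S_j)\Big],\qquad g_n(y)=\sum_{e\in\mathbb{Z}^d,|e|=1}\frac1{2d}\sum_{i=1}^n\frac{e^{\otimes i}}{i!}\otimes\rho_{n-i}(\Phi_\Gamma(y+e)),$$ and $\rho_0(\Phi_\Gamma(x))=1$, $\rho_1(\Phi_\Gamma(x))=0$ for every $x\in\bar\Gamma$.
   Context: Let $(S_k)_{k\ge0}$ be the simple random walk on $\mathbb{Z}^d$ started at $S_0=x$ (under $\mathbb{E}^x$), with i.i.d. increments uniformly distributed on the $2d$ unit vectors of $\mathbb{Z}^d$. $\partial\Gamma=\{y\in\mathbb{Z}^d\setminus\Gamma: |y-w|=1\text{ for some }w\in\Gamma\}$, $\bar\Gamma=\Gamma\cup\partial\Gamma$, $\tau=\min\{k\ge0:S_k\notin\Gamma\}$. $T((\mathbb{R}^d))$ is the algebra of formal tensor series $\mathbf a=(a_0,a_1,\dots)$, $a_n\in(\mathbb{R}^d)^{\otimes n}$, with $(\mathbf a\otimes\mathbf b)_n=\sum_{k=0}^na_k\otimes b_{n-k}$ and $\rho_n(\mathbf a)=a_n$; $\exp(v)=\sum_{i\ge0}v^{\otimes i}/i!$ for $v\in\mathbb{R}^d$. $\Phi_\Gamma(x)=\mathbb{E}^x[\exp(S_1-S_0)\otimes\cdots\otimes\exp(S_\tau-S_{\tau-1})]$ (coordinatewise;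 equal to $(1,0,0,\dots)$ if $\tau=0$), the expected signature of the piecewise linear random walk path stopped at $\tau$. *)

From Stdlib Require Import Reals ZArith Arith List Lia ClassicalEpsilon.
Import ListNotations.
Open Scope R_scope.

Definition lsum {A : Type} (f : A -> R) (l : list A) : R :=
  fold_right Rplus 0 (map f l).

(* value of a convergent series sum_{k>=0} u k (arbitrary if divergent) *)
Definition series_value (u : nat -> R) : R :=
  epsilon (inhabits 0) (fun l => infinite_sum u l).

Definition vadd (x y : list Z) : list Z :=
  map (fun p => (fst p + snd p)%Z) (combine x y).

(* the 2d unit vectors: k = 2i gives +e_i, k = 2i+1 gives -e_i (i < d) *)
Definition unitv (d k : nat) : list Z :=
  map (fun i => if Nat.eqb i (Nat.div k 2)
                then (if Nat.even k then 1%Z else (-1)%Z) else 0%Z) (seq 0 d).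

Definition sqdist (x y : list Z) : Z :=
  fold_right Z.add 0%Z (map (fun p => ((fst p - snd p) * (fst p - snd p))%Z) (combine x y)).

Definition inG (G : list (list Z)) (y : list Z) : bool :=
  if in_dec (list_eq_dec Z.eq_dec) y G then true else false.

(* x in closure(Gamma) = Gamma ∪ ∂Gamma *)
Definition in_closure (G : list (list Z)) (x : list Z) : Prop :=
  In x G \/ (~ In x G /\ exists w, In w G /\ sqdist x w = 1%Z).

Fixpoint words (m k : nat) : list (list nat) :=
  match k with
  | O => [[]]
  | S k' => flat_map (fun a => map (cons a) (words m k')) (seq 0 m)
  end.

(* position S_j of the walk started at x with step choices s *)
Definition wpos (d : nat) (x : list Z) (s : list nat) (j : nat) : list Z :=
  fold_left vadd (map (unitv d) (firstn j s)) x.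

(* the event {tau = length s}: S_0..S_{k-1} in Gamma, S_k not in Gamma *)
Definition exits_at (d : nat) (G : list (list Z)) (x : list Z) (s : list nat) : bool :=
  forallb (fun j => inG G (wpos d x s j)) (seq 0 (length s))
  && negb (inG G (wpos d x s (length s))).

(* E^x[F(S_0,...,S_tau)] = sum_k sum_{step words s of length k with tau = k} (2d)^{-k} F(s) *)
Definition expect (d : nat) (G : list (list Z)) (x : list Z) (F : list nat -> R) : R :=
  series_value (fun k =>
    lsum (fun s => if exits_at d G x s then (/ INR (2 * d)) ^ k * F s else 0)
         (words (2 * d) k)).

(* a tensor series is given by its coordinates: a w = coefficient of
   e_{w_1} ⊗ ... ⊗ e_{w_n} (w a word over {0..d-1}); rho_n a = restriction to words of length n *)
Definition tensor := list nat -> R.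

Definition tunit : tensor := fun w => match w with [] => 1 | _ => 0 end.

Definition tmul (a b : tensor) : tensor :=
  fun w => lsum (fun k => a (firstn k w) * b (skipn k w)) (seq 0 (S (length w))).

(* exp(v) = sum_i v^{⊗ i}/i! *)
Definition texp (v : list Z) : tensor :=
  fun w => fold_right Rmult 1 (map (fun i => IZR (nth i v 0%Z)) w) / INR (fact (length w)).

(* signature exp(S_1-S_0) ⊗ ... ⊗ exp(S_k - S_{k-1}) of the piecewise linear path *)
Definition sig (d : nat) (s : list nat) : tensor :=
  fold_right (fun k acc => tmul (texp (unitv d k)) acc) tunit s.

Definition Phi (d : nat) (G : list (list Z)) (x : list Z) : tensor :=
  fun w => expect d G x (fun s => sig d s w).

(* g_n(y) = sum_{|e|=1} 1/(2d) sum_{i=1}^n e^{⊗ i}/i! ⊗ rho_{n-i}(Phi(y+e)),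
   evaluated at a word w of length n *)
Definition gfun (d : nat) (G : list (list Z)) (n : nat) (y : list Z) : tensor :=
  fun w => lsum (fun k => / INR (2 * d) *
             lsum (fun i => texp (unitv d k) (firstn i w) *
                            Phi d G (vadd y (unitv d k)) (skipn i w)) (seq 1 n))
           (seq 0 (2 * d)).

(* Write [E^x[F]] as the series of the terms [E^x[F; tau = k]].  For [x] in [Gamma], conditioning
   on the first step turns the term of index [k+1] at [x] into the average over the [2d] neighbours
   [x+e] of the term of index [k] for the shifted functional, and Chen's identity
   [sig (e :: s) = exp e ⊗ sig s] makes this a first-step equation for [Phi].

   Since [Gamma] is finite, the ray from any point in the direction [e_1] leaves [Gamma] within
   [|Gamma|] steps, so from everywhere the walk exits within [|Gamma|] steps with probability at
   least [(2d)^-|Gamma|].  This gives a uniform bound on every [W] with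
   [W_{N+1}(x) <= kappa + 1_Gamma(x) avg_e W_N(x+e)], from which follow the absolute convergence of
   all the series involved (for the signature by induction on the length of the word) and the
   uniqueness of solutions of [u = avg_e u(.+e)] on [Gamma], [u = 0] outside.

   For a non-empty word [w], both [x |-> Phi(x)_w] and [x |-> E^x[sum_{j<tau} g_n(S_j)_w]] vanish
   outside [Gamma] and satisfy [u = g_n(.)_w + avg_e u(.+e)] on [Gamma], hence coincide.  Levels 0
   and 1 follow the same way, level 1 because the [2d] unit vectors sum to zero. *)

From Stdlib Require Import Reals ZArith List Lia Lra ClassicalEpsilon FunctionalExtensionality.
Import ListNotations.
Open Scope R_scope.

Lemma lsum_nil {A} (f : A -> R) : lsum f [] = 0.
Proof. reflexivity. Qed.

Lemma lsum_cons {A} (f : A -> R) a l : lsum f (a :: l) = f a + lsum f l.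
Proof. reflexivity. Qed.

Lemma lsum_app {A} (f : A -> R) l1 l2 : lsum f (l1 ++ l2) = lsum f l1 + lsum f l2.
Proof.
  induction l1 as [|a l1 IH]; [rewrite lsum_nil, app_nil_l; ring|].
  rewrite <- app_comm_cons, !lsum_cons, IH. ring.
Qed.

Lemma lsum_ext {A} (f g : A -> R) l : (forall x, In x l -> f x = g x) -> lsum f l = lsum g l.
Proof.
  induction l as [|a l IH]; intros H; [reflexivity|].
  rewrite !lsum_cons, H, IH; [reflexivity | intros; apply H; right; auto | left; auto].
Qed.

Lemma lsum_plus {A} (f g : A -> R) l : lsum (fun x => f x + g x) l = lsum f l + lsum g l.
Proof. induction l as [|a l IH]; [rewrite !lsum_nil; ring|]. rewrite !lsum_cons, IH; ring. Qed.

Lemma lsum_scal {A} (f : A -> R) c l : lsum (fun x => c * f x) l = c * lsum f l.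
Proof. induction l as [|a l IH]; [rewrite !lsum_nil; ring|]. rewrite !lsum_cons, IH; ring. Qed.

Lemma lsum_const {A} c (l : list A) : lsum (fun _ => c) l = INR (length l) * c.
Proof.
  induction l as [|a l IH]; [rewrite lsum_nil; cbn [length INR]; ring|].
  rewrite lsum_cons, IH, length_cons, S_INR. ring.
Qed.

Lemma lsum_eq_0 {A} (f : A -> R) l : (forall x, In x l -> f x = 0) -> lsum f l = 0.
Proof. intros H. rewrite (lsum_ext f (fun _ => 0)), lsum_const by exact H. ring. Qed.

Lemma lsum_le {A} (f g : A -> R) l : (forall x, In x l -> f x <= g x) -> lsum f l <= lsum g l.
Proof.
  induction l as [|a l IH]; intros H; [rewrite !lsum_nil; lra|]. rewrite !lsum_cons.
  apply Rplus_le_compat; [apply H; left; auto | apply IH; intros; apply H; right; auto].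
Qed.

Lemma Rabs_lsum {A} (f : A -> R) l : Rabs (lsum f l) <= lsum (fun x => Rabs (f x)) l.
Proof.
  induction l as [|a l IH]; [rewrite !lsum_nil, Rabs_R0; lra|]. rewrite !lsum_cons.
  eapply Rle_trans; [apply Rabs_triang | lra].
Qed.

Lemma lsum_nonneg {A} (f : A -> R) l : (forall x, In x l -> 0 <= f x) -> 0 <= lsum f l.
Proof. intros H. rewrite <- (Rmult_0_r (INR (length l))), <- lsum_const. now apply lsum_le. Qed.

Lemma lsum_member_le {A} (f : A -> R) l a :
  (forall x, In x l -> 0 <= f x) -> In a l -> f a <= lsum f l.
Proof.
  induction l as [|b l IH]; intros H Ha; [destruct Ha|]. rewrite lsum_cons.
  assert (0 <= f b) by (apply H; left; auto).
  assert (0 <= lsum f l) by (apply lsum_nonneg; intros; apply H; right; auto).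
  destruct Ha as [<-|Ha]; [lra|].
  assert (f a <= lsum f l) by (apply IH; auto; intros; apply H; right; auto). lra.
Qed.

Lemma lsum_map {A B} (f : B -> R) (h : A -> B) l : lsum f (map h l) = lsum (fun x => f (h x)) l.
Proof. unfold lsum. now rewrite map_map. Qed.

Lemma lsum_flat_map {A B} (f : B -> R) (g : A -> list B) l :
  lsum f (flat_map g l) = lsum (fun a => lsum f (g a)) l.
Proof.
  induction l as [|a l IH]; [reflexivity|].
  cbn [flat_map]. now rewrite lsum_app, lsum_cons, IH.
Qed.

Lemma sum_f_R0_lsum {A} (u : A -> nat -> R) l N :
  sum_f_R0 (fun k => lsum (fun a => u a k) l) N = lsum (fun a => sum_f_R0 (u a) N) l.
Proof.
  induction N as [|N IH]; [reflexivity|].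
  cbn [sum_f_R0]. now rewrite IH, <- lsum_plus.
Qed.

Lemma inv_INR_nonneg n : 0 <= / INR n.
Proof.
  destruct n; [cbn [INR]; rewrite Rinv_0; lra|].
  left. apply Rinv_0_lt_compat, lt_0_INR. lia.
Qed.

Lemma forallb_map {A B} (f : B -> bool) (g : A -> B) l :
  forallb f (map g l) = forallb (fun x => f (g x)) l.
Proof. induction l as [|a l IH]; cbn; [reflexivity | now rewrite IH]. Qed.

Definition summable (u : nat -> R) : Prop := exists l, infinite_sum u l.

Lemma summable_of_abs_bounded u C :
  (forall N, sum_f_R0 (fun k => Rabs (u k)) N <= C) -> summable u.
Proof.
  intros HC.
  destruct (growing_cv (sum_f_R0 (fun k => Rabs (u k)))) as [l Hl].
  - intros n. cbn [sum_f_R0]. pose proof (Rabs_pos (u (S n))). lra.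
  - exists C. intros x [n ->]. apply HC.
  - destruct (cv_cauchy_2 u (cauchy_abs u (cv_cauchy_1 _ (exist _ l Hl)))) as [l' Hl'].
    now exists l'.
Qed.

Lemma series_value_eq u l : infinite_sum u l -> series_value u = l.
Proof.
  intros H. apply (uniqueness_sum u); [|exact H].
  apply (epsilon_spec (inhabits 0) (fun l => infinite_sum u l)). now exists l.
Qed.

Lemma series_value_spec u : summable u -> infinite_sum u (series_value u).
Proof. intros [l Hl]. now rewrite (series_value_eq u l Hl). Qed.

Lemma infinite_sum_ext u v l : (forall k, u k = v k) -> infinite_sum u l -> infinite_sum v l.
Proof. intros H. now replace v with u by (apply functional_extensionality; auto). Qed.

Lemma infinite_sum_plus u v lu lv :
  infinite_sum u lu -> infinite_sum v lv -> infinite_sum (fun k => u k + v k) (lu + lv).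
Proof.
  intros Hu Hv. apply (Un_cv_ext (fun n => sum_f_R0 u n + sum_f_R0 v n)).
  - intros n. now rewrite plus_sum.
  - now apply CV_plus.
Qed.

Lemma infinite_sum_scal u c l : infinite_sum u l -> infinite_sum (fun k => c * u k) (c * l).
Proof.
  intros Hu. apply (Un_cv_ext (fun n => c * sum_f_R0 u n)).
  - intros n. rewrite scal_sum. apply sum_eq. intros; ring.
  - apply CV_mult; [|exact Hu]. intros eps Heps. exists 0%nat. intros.
    unfold Rdist. rewrite Rminus_diag, Rabs_R0. lra.
Qed.

Lemma infinite_sum_0 : infinite_sum (fun _ => 0) 0.
Proof.
  intros eps Heps. exists 0%nat. intros n _.
  unfold Rdist. rewrite sum_cte, Rmult_0_l, Rminus_diag, Rabs_R0. lra.
Qed.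

Lemma infinite_sum_S u l : infinite_sum (fun k => u (S k)) l -> infinite_sum u (u 0%nat + l).
Proof.
  intros H eps Heps. destruct (H eps Heps) as [N HN]. exists (S N). intros n Hn.
  destruct n as [|n]; [lia|]. rewrite (decomp_sum u (S n)) by lia.
  unfold Rdist in *. replace (_ - _) with (sum_f_R0 (fun k => u (S k)) n - l) by (cbn [pred]; ring).
  apply HN. lia.
Qed.

Lemma infinite_sum_lsum {A} (u : A -> nat -> R) (lu : A -> R) l :
  (forall a, In a l -> infinite_sum (u a) (lu a)) ->
  infinite_sum (fun k => lsum (fun a => u a k) l) (lsum lu l).
Proof.
  induction l as [|a l IH]; intros H.
  - exact infinite_sum_0.
  - rewrite lsum_cons.
    apply (infinite_sum_ext (fun k => u a k + lsum (fun b => u b k) l)); [reflexivity|].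
    apply infinite_sum_plus; [apply H; left; auto | apply IH; intros; apply H; right; auto].
Qed.

Section RandomWalk.

Variable d : nat.
Variable G : list (list Z).
Hypothesis d_pos : (1 <= d)%nat.
Hypothesis G_dim : forall y, In y G -> length y = d.

Lemma inG_spec y : inG G y = true <-> In y G.
Proof. unfold inG. destruct (in_dec _ y G); split; auto; discriminate. Qed.

Definition avg (f : nat -> R) : R := / INR (2 * d) * lsum f (seq 0 (2 * d)).

Lemma avg_ext f g : (forall a, f a = g a) -> avg f = avg g.
Proof. intros H. unfold avg. f_equal. apply lsum_ext; auto. Qed.

Lemma avg_plus f g : avg (fun a => f a + g a) = avg f + avg g.
Proof. unfold avg. rewrite lsum_plus. ring. Qed.

Lemma avg_scal c f : avg (fun a => c * f a) = c * avg f.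
Proof. unfold avg. rewrite lsum_scal. ring. Qed.

Lemma avg_const c : avg (fun _ => c) = c.
Proof.
  unfold avg. rewrite lsum_const, length_seq. field. apply not_0_INR. lia.
Qed.

Lemma avg_minus f g : avg (fun a => f a - g a) = avg f - avg g.
Proof.
  unfold avg, Rminus. rewrite lsum_plus, (lsum_ext (fun a => - g a) (fun a => -1 * g a)), lsum_scal
    by (intros; ring).
  ring.
Qed.

Lemma avg_le f g : (forall a, f a <= g a) -> avg f <= avg g.
Proof. intros H. apply Rmult_le_compat_l; [apply inv_INR_nonneg | apply lsum_le; auto]. Qed.

Lemma Rabs_avg f : Rabs (avg f) <= avg (fun a => Rabs (f a)).
Proof.
  unfold avg. rewrite Rabs_mult, (Rabs_right (/ _)) by (apply Rle_ge, inv_INR_nonneg).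
  apply Rmult_le_compat_l; [apply inv_INR_nonneg | apply Rabs_lsum].
Qed.

Lemma sum_f_R0_avg (u : nat -> nat -> R) N :
  sum_f_R0 (fun k => avg (fun a => u a k)) N = avg (fun a => sum_f_R0 (u a) N).
Proof.
  unfold avg. rewrite <- sum_f_R0_lsum, scal_sum. apply sum_eq. intros; ring.
Qed.

Definition expect_at (k : nat) (x : list Z) (F : list nat -> R) : R :=
  lsum (fun s => if exits_at d G x s then (/ INR (2 * d)) ^ k * F s else 0) (words (2 * d) k).

Lemma expect_series x F : expect d G x F = series_value (fun k => expect_at k x F).
Proof. reflexivity. Qed.

Lemma exits_at_cons x a s :
  exits_at d G x (a :: s) = (inG G x && exits_at d G (vadd x (unitv d a)) s)%bool.
Proof.
  unfold exits_at. rewrite length_cons, <- cons_seq, <- seq_shift.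
  cbn [forallb]. rewrite forallb_map. change (wpos d x (a :: s) 0) with x.
  now destruct (inG G x).
Qed.

Lemma expect_at_0 x F : expect_at 0 x F = if inG G x then 0 else F [].
Proof.
  unfold expect_at. cbn [words]. rewrite lsum_cons, lsum_nil.
  unfold exits_at; cbn. destruct (inG G x); cbn; ring.
Qed.

Lemma expect_at_S x k F : inG G x = true ->
  expect_at (S k) x F = avg (fun a => expect_at k (vadd x (unitv d a)) (fun s => F (a :: s))).
Proof.
  intros Hx. unfold expect_at at 1, avg. cbn [words].
  rewrite lsum_flat_map, <- lsum_scal. apply lsum_ext. intros a _.
  rewrite lsum_map. unfold expect_at. rewrite <- lsum_scal. apply lsum_ext. intros s _.
  rewrite exits_at_cons, Hx. destruct (exits_at _ _ _ s); cbn [andb pow]; ring.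
Qed.

Lemma expect_at_S_out x k F : inG G x = false -> expect_at (S k) x F = 0.
Proof.
  intros Hx. unfold expect_at. apply lsum_eq_0. intros s Hs.
  cbn [words] in Hs. apply in_flat_map in Hs as [a [_ Ha]].
  apply in_map_iff in Ha as [s' [<- _]]. now rewrite exits_at_cons, Hx.
Qed.

Lemma expect_at_ext k x F F' : (forall s, F s = F' s) -> expect_at k x F = expect_at k x F'.
Proof. intros H. now replace F' with F by (apply functional_extensionality; auto). Qed.

Lemma expect_at_plus k x F F' :
  expect_at k x (fun s => F s + F' s) = expect_at k x F + expect_at k x F'.
Proof.
  unfold expect_at. rewrite <- lsum_plus. apply lsum_ext. intros s _.
  destruct (exits_at _ _ _ s); ring.
Qed.

Lemma expect_at_scal k x c F : expect_at k x (fun s => c * F s) = c * expect_at k x F.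
Proof.
  unfold expect_at. rewrite <- lsum_scal. apply lsum_ext. intros s _.
  destruct (exits_at _ _ _ s); ring.
Qed.

Lemma expect_at_lsum {A} k x (F : A -> list nat -> R) l :
  expect_at k x (fun s => lsum (fun i => F i s) l) = lsum (fun i => expect_at k x (F i)) l.
Proof.
  induction l as [|i l IH].
  - unfold expect_at. rewrite lsum_nil. apply lsum_eq_0. intros s _.
    rewrite lsum_nil. destruct (exits_at _ _ _ s); ring.
  - rewrite (expect_at_ext _ _ _ (fun s => F i s + lsum (fun j => F j s) l)) by reflexivity.
    now rewrite expect_at_plus, IH.
Qed.

Definition abs_partial (N : nat) (x : list Z) (F : list nat -> R) : R :=
  sum_f_R0 (fun k => Rabs (expect_at k x F)) N.

Lemma abs_partial_S N x F :
  abs_partial (S N) x F <= Rabs (expect_at 0 x F) +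
    if inG G x then avg (fun a => abs_partial N (vadd x (unitv d a)) (fun s => F (a :: s))) else 0.
Proof.
  unfold abs_partial. rewrite decomp_sum by lia. cbn [pred]. apply Rplus_le_compat_l.
  destruct (inG G x) eqn:Hx.
  - rewrite <- sum_f_R0_avg. apply sum_Rle. intros k _.
    rewrite expect_at_S by exact Hx. apply Rabs_avg.
  - rewrite (sum_eq _ (fun _ => 0)), sum_cte by (intros; now rewrite expect_at_S_out, Rabs_R0).
    lra.
Qed.

Lemma abs_partial_plus N x F F' :
  abs_partial N x (fun s => F s + F' s) <= abs_partial N x F + abs_partial N x F'.
Proof.
  unfold abs_partial. rewrite <- plus_sum. apply sum_Rle. intros k _.
  rewrite expect_at_plus. apply Rabs_triang.
Qed.

Lemma abs_partial_scal N x c F : abs_partial N x (fun s => c * F s) = Rabs c * abs_partial N x F.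
Proof.
  unfold abs_partial. rewrite scal_sum. apply sum_eq. intros k _.
  rewrite expect_at_scal, Rabs_mult. ring.
Qed.

Lemma abs_partial_lsum {A} N x (F : A -> list nat -> R) l :
  abs_partial N x (fun s => lsum (fun i => F i s) l) <= lsum (fun i => abs_partial N x (F i)) l.
Proof.
  unfold abs_partial. rewrite <- sum_f_R0_lsum. apply sum_Rle. intros k _.
  rewrite expect_at_lsum. apply Rabs_lsum.
Qed.

Lemma abs_partial_nonneg N x F : 0 <= abs_partial N x F.
Proof. apply cond_pos_sum. intros; apply Rabs_pos. Qed.

Lemma avg_split_first f A B :
  f 0%nat <= A -> (forall a, f a <= B) -> avg f <= / INR (2 * d) * A + (1 - / INR (2 * d)) * B.
Proof.
  intros HA HB. unfold avg.
  replace (2 * d)%nat with (S (2 * d - 1)) at 2 by lia. rewrite <- cons_seq, lsum_cons.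
  pose proof (lsum_le _ (fun _ => B) (seq 1 (2 * d - 1)) (fun a _ => HB a)) as Hrest.
  rewrite lsum_const, length_seq in Hrest.
  assert (Hq : INR (2 * d) = INR (2 * d - 1) + 1) by (rewrite <- S_INR; f_equal; lia).
  pose proof (pos_INR (2 * d - 1)).
  rewrite Hq in *. rewrite Rmult_plus_distr_l.
  replace ((1 - / (INR (2 * d - 1) + 1)) * B) with (/ (INR (2 * d - 1) + 1) * (INR (2 * d - 1) * B))
    by (field; lra).
  assert (0 <= / (INR (2 * d - 1) + 1)) by (apply Rlt_le, Rinv_0_lt_compat; lra).
  apply Rplus_le_compat; apply Rmult_le_compat_l; assumption.
Qed.

Definition ray (y : list Z) (j : nat) : list Z := Nat.iter j (fun z => vadd z (unitv d 0)) y.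

Lemma ray_dim_hd y j : length y = d ->
  length (ray y j) = d /\ hd 0%Z (ray y j) = (hd 0%Z y + Z.of_nat j)%Z.
Proof.
  intros Hy. induction j as [|j [IHl IHh]]; [split; cbn; lia|].
  unfold ray. rewrite Nat.iter_succ. fold (ray y j).
  destruct (ray y j) as [|c z]; [cbn in IHl; lia|].
  unfold unitv. destruct d as [|d']; [lia|]. cbn [seq map]. unfold vadd. cbn -[Z.of_nat].
  split.
  - rewrite length_map, length_combine, length_map, length_seq. cbn in IHl. lia.
  - cbn in IHh. lia.
Qed.

Lemma ray_leaves y : exists j, (j <= length G)%nat /\ inG G (ray y j) = false.
Proof.
  destruct (existsb (fun j => negb (inG G (ray y j))) (seq 0 (S (length G)))) eqn:E.
  - apply existsb_exists in E as [j [Hj Hout]]. apply in_seq in Hj.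
    exists j. split; [lia | now destruct (inG G (ray y j))].
  - exfalso. assert (Hin : forall j, (j <= length G)%nat -> In (ray y j) G).
    { intros j Hj. apply inG_spec. destruct (inG G (ray y j)) eqn:Ej; [reflexivity|].
      rewrite <- Bool.not_true_iff_false in E. exfalso. apply E, existsb_exists.
      exists j. split; [apply in_seq; lia | now rewrite Ej]. }
    assert (Hy : length y = d) by exact (G_dim y (Hin 0%nat (Nat.le_0_l _))).
    assert (Hnd : NoDup (map (ray y) (seq 0 (S (length G))))).
    { apply NoDup_map_NoDup_ForallPairs; [|apply seq_NoDup].
      intros j1 j2 _ _ Heq. apply (f_equal (hd 0%Z)) in Heq.
      rewrite (proj2 (ray_dim_hd y j1 Hy)), (proj2 (ray_dim_hd y j2 Hy)) in Heq. lia. }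
    apply (NoDup_incl_length (l' := G)) in Hnd.
    + rewrite length_map, length_seq in Hnd. lia.
    + intros z Hz. apply in_map_iff in Hz as [j [<- Hj]]. apply in_seq in Hj. apply Hin. lia.
Qed.

Lemma subsolution_bound : exists M, 0 <= M /\
  forall (W : nat -> list Z -> R) kap, 0 <= kap ->
  (forall x, W 0%nat x <= kap) ->
  (forall N x, W (S N) x <= kap + if inG G x then avg (fun a => W N (vadd x (unitv d a))) else 0) ->
  forall N x, W N x <= kap * M.
Proof.
  set (p := / INR (2 * d)). set (T := length G).
  assert (Hp : 0 < p <= 1).
  { assert (1 <= INR (2 * d)) by (apply (le_INR 1); lia).
    split; [apply Rinv_0_lt_compat; lra | rewrite <- Rinv_1; apply Rinv_le_contravar; lra]. }
  assert (HpT : 0 < p ^ T) by (apply pow_lt; lra).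
  set (M := 1 + INR T / p ^ T).
  set (b := fun t => p ^ t * (M - 1) - INR t).
  assert (HM : 0 <= M - 1).
  { unfold M. pose proof (pos_INR T). pose proof (Rinv_0_lt_compat _ HpT). unfold Rdiv. nra. }
  assert (Hb_le : forall t, b t <= M - 1).
  { intros t. pose proof (pow_incr p 1 t ltac:(lra)). rewrite pow1 in H.
    pose proof (pos_INR t). unfold b. nra. }
  assert (HbT : b T = 0) by (unfold b, M; field; lra).
  assert (Hb_step : forall t, b (S t) <= p * b t - 1).
  { intros t. unfold b. rewrite S_INR. cbn [pow]. pose proof (pos_INR t). nra. }
  exists M. split; [lra|]. intros W kap Hk H0 HS.
  (* If the ray from [x] leaves [G] within [t] steps, [W N x] is [kap * b t] below [kap * M];
     [M] is chosen so that [b T = 0], which makes the claim for [t = T] hold at every point. *)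
  assert (Hclaim : forall N t x, (exists j, (j <= t)%nat /\ inG G (ray x j) = false) ->
                    W N x <= kap * (M - b t)).
  { induction N as [|N IH]; intros t x Hx.
    - specialize (H0 x). specialize (Hb_le t). nra.
    - assert (Hall : forall y, W N y <= kap * M).
      { intros y. destruct (ray_leaves y) as [j Hj].
        specialize (IH T y (ex_intro _ j Hj)). rewrite HbT in IH. lra. }
      specialize (HS N x). destruct (inG G x) eqn:Hin.
      + destruct Hx as [[|j] [Hj Hout]]; [cbn in Hout; congruence|]. destruct t as [|t]; [lia|].
        assert (Hfirst : W N (vadd x (unitv d 0)) <= kap * (M - b t)).
        { apply IH. exists j. split; [lia|].
          unfold ray in Hout. now rewrite Nat.iter_succ_r in Hout. }
        pose proof (avg_split_first _ _ _ Hfirst (fun a => Hall _)) as Havg. fold p in Havg.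
        specialize (Hb_step t). nra.
      + specialize (Hb_le t). nra. }
  intros N x. destruct (ray_leaves x) as [j Hj].
  specialize (Hclaim N T x (ex_intro _ j Hj)). rewrite HbT in Hclaim. lra.
Qed.

Lemma dirichlet_unique (D : list Z -> R) :
  (forall x, inG G x = false -> D x = 0) ->
  (forall x, inG G x = true -> D x = avg (fun a => D (vadd x (unitv d a)))) ->
  forall x, D x = 0.
Proof.
  intros Hout Hin. destruct subsolution_bound as [M [_ HW]].
  set (K := lsum (fun y => Rabs (D y)) G).
  assert (HK0 : 0 <= K) by (apply lsum_nonneg; intros; apply Rabs_pos).
  assert (HK : forall x, Rabs (D x) <= K).
  { intros x. destruct (inG G x) eqn:Hx.
    - apply (lsum_member_le (fun y => Rabs (D y))); [intros; apply Rabs_pos | now apply inG_spec].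
    - now rewrite Hout, Rabs_R0 by exact Hx. }
  assert (Hgrow : forall N x, INR N * Rabs (D x) <= K * M).
  { apply HW; [exact HK0 | intros; cbn [INR]; lra |].
    intros N x. rewrite S_INR, Rmult_plus_distr_r, Rmult_1_l, Rplus_comm.
    apply Rplus_le_compat; [apply HK|]. destruct (inG G x) eqn:Hx.
    - rewrite (avg_scal (INR N) (fun a => Rabs (D (vadd x (unitv d a))))), Hin by exact Hx.
      apply Rmult_le_compat_l; [apply pos_INR | apply Rabs_avg].
    - rewrite Hout, Rabs_R0 by exact Hx. lra. }
  intros x. destruct (Req_dec (D x) 0) as [|Hne]; [assumption|].
  destruct (INR_archimed (Rabs (D x)) (K * M)) as [N HN]; [now apply Rabs_pos_lt|].
  specialize (Hgrow N x). lra.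
Qed.

Lemma expect_out x F : inG G x = false -> expect d G x F = F [].
Proof.
  intros Hx. rewrite expect_series. apply series_value_eq.
  replace (F []) with (expect_at 0 x F + 0) by (rewrite expect_at_0, Hx; ring).
  apply infinite_sum_S, (infinite_sum_ext (fun _ => 0)); [|exact infinite_sum_0].
  intros k. now rewrite expect_at_S_out.
Qed.

Lemma expect_first_step x F (u : nat -> nat -> R) (L : nat -> R) : inG G x = true ->
  (forall a k, expect_at k (vadd x (unitv d a)) (fun s => F (a :: s)) = u a k) ->
  (forall a, infinite_sum (u a) (L a)) ->
  expect d G x F = avg L.
Proof.
  intros Hx Hu HL. rewrite expect_series. apply series_value_eq.
  replace (avg L) with (expect_at 0 x F + avg L) by (rewrite expect_at_0, Hx; ring).
  apply infinite_sum_S, (infinite_sum_ext (fun k => avg (fun a => u a k))).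
  - intros k. rewrite expect_at_S by exact Hx. apply avg_ext. intros a. now rewrite Hu.
  - apply infinite_sum_scal, infinite_sum_lsum. intros a _. apply HL.
Qed.

Lemma abs_partial_one_bounded : exists C, forall N x, abs_partial N x (fun _ => 1) <= C.
Proof.
  destruct subsolution_bound as [M [_ HW]]. exists (1 * M).
  assert (H0 : forall x, Rabs (expect_at 0 x (fun _ => 1)) <= 1).
  { intros x. rewrite expect_at_0. destruct (inG G x); rewrite ?Rabs_R0, ?Rabs_R1; lra. }
  apply HW; [lra | exact H0 |]. intros N x.
  eapply Rle_trans; [apply abs_partial_S|]. specialize (H0 x).
  destruct (inG G x); lra.
Qed.

Lemma exit_prob_one x : infinite_sum (fun k => expect_at k x (fun _ => 1)) 1.
Proof.
  destruct abs_partial_one_bounded as [C HC].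
  assert (Hsum : forall y,
    infinite_sum (fun k => expect_at k y (fun _ => 1)) (expect d G y (fun _ => 1))).
  { intros y. apply series_value_spec, (summable_of_abs_bounded _ C). intros N. apply HC. }
  assert (Hone : forall y, expect d G y (fun _ => 1) - 1 = 0).
  { apply dirichlet_unique; intros y Hy.
    - rewrite expect_out by exact Hy. ring.
    - rewrite (expect_first_step y _ _ (fun a => expect d G (vadd y (unitv d a)) (fun _ => 1)) Hy)
        by (reflexivity || (intros; apply Hsum)).
      now rewrite avg_minus, avg_const. }
  specialize (Hsum x).
  now replace (expect d G x (fun _ => 1)) with 1 in Hsum by (specialize (Hone x); lra).
Qed.

Definition path_sum (g : list Z -> R) (x : list Z) (s : list nat) : R :=
  lsum (fun j => g (wpos d x s j)) (seq 0 (length s)).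

Lemma path_sum_cons g x a s : path_sum g x (a :: s) = g x + path_sum g (vadd x (unitv d a)) s.
Proof.
  unfold path_sum. now rewrite length_cons, <- cons_seq, <- seq_shift, lsum_cons, lsum_map.
Qed.

Lemma abs_partial_ext N x F F' :
  (forall s, F s = F' s) -> abs_partial N x F = abs_partial N x F'.
Proof.
  intros H. unfold abs_partial. apply sum_eq. intros k _. now rewrite (expect_at_ext _ _ _ _ H).
Qed.

Lemma abs_partial_path_sum_bounded g : exists C, forall N x, abs_partial N x (path_sum g x) <= C.
Proof.
  destruct abs_partial_one_bounded as [C1 HC1]. destruct subsolution_bound as [M [_ HW]].
  set (K := lsum (fun y => Rabs (g y)) G).
  assert (HK : 0 <= K) by (apply lsum_nonneg; intros; apply Rabs_pos).
  assert (HC1' : 0 <= C1) by exact (Rle_trans _ _ _ (abs_partial_nonneg 0 [] _) (HC1 0%nat [])).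
  assert (H0 : forall x, expect_at 0 x (path_sum g x) = 0)
    by (intros x; rewrite expect_at_0; now destruct (inG G x)).
  exists (K * C1 * M). apply HW; [nra | |].
  { intros x. unfold abs_partial. cbn [sum_f_R0]. rewrite H0, Rabs_R0. nra. }
  intros N x. eapply Rle_trans; [apply abs_partial_S|]. rewrite H0, Rabs_R0, Rplus_0_l.
  destruct (inG G x) eqn:Hx; [|nra].
  rewrite <- (avg_const (K * C1)), <- avg_plus. apply avg_le. intros a.
  rewrite (abs_partial_ext _ _ _ (fun s => g x * 1 + path_sum g (vadd x (unitv d a)) s))
    by (intros; rewrite path_sum_cons; ring).
  eapply Rle_trans; [apply abs_partial_plus|]. rewrite abs_partial_scal.
  apply Rplus_le_compat_r, Rmult_le_compat; [apply Rabs_pos | apply abs_partial_nonneg | |apply HC1].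
  apply (lsum_member_le (fun y => Rabs (g y))); [intros; apply Rabs_pos | now apply inG_spec].
Qed.

Lemma expect_path_sum_out g x : inG G x = false -> expect d G x (path_sum g x) = 0.
Proof. intros Hx. now rewrite expect_out. Qed.

Lemma expect_path_sum_step g x : inG G x = true ->
  expect d G x (path_sum g x) =
  g x + avg (fun a => expect d G (vadd x (unitv d a)) (path_sum g (vadd x (unitv d a)))).
Proof.
  intros Hx. destruct (abs_partial_path_sum_bounded g) as [C HC].
  rewrite <- (avg_const (g x)), <- avg_plus.
  rewrite <- (avg_ext (fun a => g x * 1 +
                expect d G (vadd x (unitv d a)) (path_sum g (vadd x (unitv d a))))) by (intros; ring).
  apply (expect_first_step _ _ (fun a k => g x * expect_at k (vadd x (unitv d a)) (fun _ => 1) +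
           expect_at k (vadd x (unitv d a)) (path_sum g (vadd x (unitv d a))))); [exact Hx | |].
  - intros a k. rewrite <- expect_at_scal, <- expect_at_plus. apply expect_at_ext. intros s.
    rewrite path_sum_cons. ring.
  - intros a. apply infinite_sum_plus; [apply infinite_sum_scal, exit_prob_one|].
    apply series_value_spec, (summable_of_abs_bounded _ C). intros N. apply HC.
Qed.

Lemma nth_unitv a i : nth i (unitv d a) 0%Z =
  if ((i <? d) && (i =? Nat.div a 2))%bool then (if Nat.even a then 1%Z else (-1)%Z) else 0%Z.
Proof.
  unfold unitv. destruct (Nat.ltb_spec i d) as [Hi|Hi]; cbn [andb].
  - set (f := fun j => if j =? Nat.div a 2 then (if Nat.even a then 1%Z else (-1)%Z) else 0%Z).
    rewrite nth_indep with (d' := f 0%nat) by now rewrite length_map, length_seq.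
    now rewrite map_nth, seq_nth.
  - apply nth_overflow. now rewrite length_map, length_seq.
Qed.

Lemma Rabs_texp_unitv a u : Rabs (texp (unitv d a) u) <= 1.
Proof.
  unfold texp, Rdiv. rewrite Rabs_mult.
  assert (Hprod : Rabs (fold_right Rmult 1 (map (fun i => IZR (nth i (unitv d a) 0%Z)) u)) <= 1).
  { induction u as [|i u IH]; cbn [map fold_right]; [rewrite Rabs_R1; lra|].
    rewrite Rabs_mult. apply Rle_trans with (1 * 1); [|lra].
    apply Rmult_le_compat; try apply Rabs_pos; [|exact IH].
    rewrite nth_unitv. destruct (andb _ _); [destruct (Nat.even a)|]; apply Rabs_le; lra. }
  assert (Hfact : 1 <= INR (fact (length u))) by (apply (le_INR 1), lt_O_fact).
  rewrite Rabs_inv, (Rabs_right (INR _)) by lra. apply Rle_trans with (1 * 1); [|lra].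
  apply Rmult_le_compat; [apply Rabs_pos | left; apply Rinv_0_lt_compat; lra | exact Hprod |].
  rewrite <- Rinv_1. apply Rinv_le_contravar; lra.
Qed.

Lemma Rabs_expect_at_0_sig x w : Rabs (expect_at 0 x (fun s => sig d s w)) <= 1.
Proof.
  rewrite expect_at_0. destruct (inG G x); [rewrite Rabs_R0; lra|].
  destruct w; cbn [sig fold_right tunit]; [rewrite Rabs_R1 | rewrite Rabs_R0]; lra.
Qed.

Lemma abs_partial_sig_cons N y a w :
  abs_partial N y (fun s => sig d (a :: s) w) <=
  lsum (fun i => abs_partial N y (fun s => sig d s (skipn i w))) (seq 0 (S (length w))).
Proof.
  eapply Rle_trans;
    [apply (abs_partial_lsum N y (fun i s => texp (unitv d a) (firstn i w) * sig d s (skipn i w)))|].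
  apply lsum_le. intros i _. rewrite abs_partial_scal.
  pose proof (Rabs_texp_unitv a (firstn i w)).
  pose proof (abs_partial_nonneg N y (fun s => sig d s (skipn i w))). nra.
Qed.

Lemma sig_bound_by_length n : exists C, 0 <= C /\
  forall w, (length w < n)%nat -> forall N x, abs_partial N x (fun s => sig d s w) <= C.
Proof.
  destruct subsolution_bound as [M [HM HW]].
  induction n as [|n [C [HC IH]]]; [exists 0; split; [lra | intros; lia]|].
  exists (Rmax C ((1 + INR n * C) * M)). split; [apply (Rle_trans _ _ _ HC), Rmax_l|].
  intros w Hw N x. destruct (Nat.eq_dec (length w) n) as [Hn|Hn].
  2:{ apply (Rle_trans _ _ _ (IH w ltac:(lia) N x)), Rmax_l. }
  eapply Rle_trans; [|apply Rmax_r]. revert N x. pose proof (pos_INR n).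
  apply HW; [nra | |].
  { intros x. pose proof (Rabs_expect_at_0_sig x w). unfold abs_partial. cbn [sum_f_R0]. nra. }
  intros N x. eapply Rle_trans; [apply abs_partial_S|]. pose proof (Rabs_expect_at_0_sig x w).
  destruct (inG G x); [|nra].
  enough (avg (fun a => abs_partial N (vadd x (unitv d a)) (fun s => sig d (a :: s) w)) <=
          avg (fun a => abs_partial N (vadd x (unitv d a)) (fun s => sig d s w)) + INR n * C) by lra.
  rewrite <- (avg_const (INR n * C)), <- avg_plus. apply avg_le. intros a.
  eapply Rle_trans; [apply abs_partial_sig_cons|]. rewrite <- cons_seq, lsum_cons.
  apply Rplus_le_compat_l, Rle_trans with (lsum (fun _ => C) (seq 1 (length w))).
  - apply lsum_le. intros i Hi. apply in_seq in Hi. apply IH. rewrite length_skipn. lia.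
  - rewrite lsum_const, length_seq, Hn. lra.
Qed.

Lemma Phi_series x w : infinite_sum (fun k => expect_at k x (fun s => sig d s w)) (Phi d G x w).
Proof.
  apply series_value_spec. destruct (sig_bound_by_length (S (length w))) as [C [_ HC]].
  apply (summable_of_abs_bounded _ C). intros N. apply HC. lia.
Qed.

Lemma Phi_out x w : inG G x = false -> Phi d G x w = tunit w.
Proof. apply expect_out. Qed.

Lemma Phi_first_step x w : inG G x = true ->
  Phi d G x w = avg (fun a => lsum (fun i => texp (unitv d a) (firstn i w) *
                       Phi d G (vadd x (unitv d a)) (skipn i w)) (seq 0 (S (length w)))).
Proof.
  intros Hx.
  apply (expect_first_step x _ (fun a k => lsum (fun i => texp (unitv d a) (firstn i w) *
           expect_at k (vadd x (unitv d a)) (fun s => sig d s (skipn i w))) (seq 0 (S (length w)))));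
    [exact Hx | |].
  - intros a k.
    rewrite <- (lsum_ext (fun i => expect_at k (vadd x (unitv d a))
                 (fun s => texp (unitv d a) (firstn i w) * sig d s (skipn i w))))
      by (intros; apply expect_at_scal).
    apply expect_at_lsum.
  - intros a. apply infinite_sum_lsum. intros i _. apply infinite_sum_scal, Phi_series.
Qed.

Lemma texp_nil v : texp v [] = 1.
Proof. unfold texp. cbn. field. Qed.

Lemma texp_single v i : texp v [i] = IZR (nth i v 0%Z).
Proof. unfold texp. cbn. field. Qed.

Lemma sig_nil_word s : sig d s [] = 1.
Proof.
  induction s as [|a s IH]; [reflexivity|].
  transitivity (texp (unitv d a) [] * sig d s [] + 0); [reflexivity|].
  rewrite IH, texp_nil. ring.
Qed.

Lemma Phi_nil x : Phi d G x [] = 1.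
Proof.
  unfold Phi. rewrite expect_series. apply series_value_eq.
  apply (infinite_sum_ext (fun k => expect_at k x (fun _ => 1))); [|apply exit_prob_one].
  intros k. apply expect_at_ext. intros s. now rewrite sig_nil_word.
Qed.

Lemma avg_unitv_coord i : avg (fun a => IZR (nth i (unitv d a) 0%Z)) = 0.
Proof.
  assert (Hpairs : forall D, lsum (fun a => IZR (if i =? Nat.div a 2 then
             (if Nat.even a then 1%Z else (-1)%Z) else 0%Z)) (seq 0 (2 * D)) = 0).
  { induction D as [|D IH]; [reflexivity|].
    replace (2 * S D)%nat with (2 * D + 2)%nat by lia. rewrite seq_app, lsum_app, IH.
    replace (seq (0 + 2 * D) 2) with [2 * D; S (2 * D)]%nat by reflexivity.
    rewrite !lsum_cons, lsum_nil, Nat.even_succ, Nat.odd_mul, Nat.even_mul.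
    replace (Nat.div (2 * D) 2) with D by (apply (Nat.div_unique _ _ _ 0); lia).
    replace (Nat.div (S (2 * D)) 2) with D by (apply (Nat.div_unique _ _ _ 1); lia).
    destruct (i =? D); cbn; ring. }
  unfold avg. rewrite (lsum_ext _ _ _ (fun a _ => f_equal IZR (nth_unitv a i))).
  destruct (i <? d); cbn [andb].
  - rewrite Hpairs. ring.
  - rewrite lsum_eq_0 by reflexivity. ring.
Qed.

Lemma Phi_single x i : Phi d G x [i] = 0.
Proof.
  revert x. apply (dirichlet_unique (fun y => Phi d G y [i])); intros y Hy.
  - now rewrite Phi_out.
  - rewrite Phi_first_step, <- (Rplus_0_r (avg (fun a => Phi d G (vadd y (unitv d a)) [i]))),
      <- (avg_unitv_coord i), <- avg_plus by exact Hy.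
    apply avg_ext. intros a. cbn [length seq]. rewrite !lsum_cons, lsum_nil. cbn [firstn skipn].
    rewrite texp_nil, texp_single, Phi_nil. ring.
Qed.

Lemma Phi_first_step_gfun x w : inG G x = true ->
  Phi d G x w = gfun d G (length w) x w + avg (fun a => Phi d G (vadd x (unitv d a)) w).
Proof.
  intros Hx. rewrite Phi_first_step by exact Hx.
  replace (gfun d G (length w) x w)
    with (avg (fun a => lsum (fun i => texp (unitv d a) (firstn i w) *
                 Phi d G (vadd x (unitv d a)) (skipn i w)) (seq 1 (length w))))
    by (unfold gfun, avg; now rewrite lsum_scal).
  rewrite <- avg_plus. apply avg_ext. intros a.
  rewrite <- cons_seq, lsum_cons. cbn [firstn skipn]. rewrite texp_nil. ring.
Qed.

Lemma Phi_eq_expect_path_sum x w : w <> [] ->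
  Phi d G x w = expect d G x (path_sum (fun y => gfun d G (length w) y w) x).
Proof.
  intros Hw. set (g := fun y => gfun d G (length w) y w).
  enough (H : forall y, Phi d G y w - expect d G y (path_sum g y) = 0) by (specialize (H x); lra).
  apply dirichlet_unique; intros y Hy.
  - rewrite Phi_out, expect_path_sum_out by exact Hy. destruct w; [congruence | cbn; ring].
  - rewrite Phi_first_step_gfun, expect_path_sum_step, avg_minus by exact Hy. unfold g. ring.
Qed.

End RandomWalk.

Theorem mainTheorem18 (d : nat) (G : list (list Z)) :
  (1 <= d)%nat ->
  (forall y, In y G -> length y = d) ->
  (forall (n : nat) (x : list Z) (w : list nat),
      (2 <= n)%nat -> length x = d -> in_closure G x ->
      length w = n -> Forall (fun i => (i < d)%nat) w ->
      Phi d G x w =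
      expect d G x (fun s => lsum (fun j => gfun d G n (wpos d x s j) w) (seq 0 (length s))))
  /\
  (forall x : list Z, length x = d -> in_closure G x ->
      Phi d G x [] = 1 /\ (forall i : nat, (i < d)%nat -> Phi d G x [i] = 0)).
Proof.
  intros Hd HG. split.
  - intros n x w Hn _ _ Hw _. subst n. apply (Phi_eq_expect_path_sum d G Hd HG).
    intros ->. cbn in Hn. lia.
  - intros x _ _. split; [apply (Phi_nil d G Hd HG) | intros i _; apply (Phi_single d G Hd HG)].
Qed.
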